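(* Let $\langle B,\wedge,{}'\rangle$ be an algebra with $\wedge$ binary and ${}'$ unary satisfying $x\wedge y\approx y\wedge x$, $x\wedge(y\wedge z)\approx(x\wedge y)\wedge z$, $x''\approx x$, and $x'\approx (x\wedge y)'\wedge(x\wedge y')'$. Then for all $x,y\in B$: $(x\wedge y\wedge x)'=(y\wedge x)'$.
   Context: By associativity, $x\wedge y\wedge x$ is unambiguous. *)

(* Every element of the form [y ∧ y'] is the same element [0], it is absorbing
   for [∧], and its complement [1 := 0'] is neutral for [∧].  The axiom with
   [y := x] then gives [x' = 1 ∧ (x ∧ x)' = (x ∧ x)'], hence [∧] is idempotent,
   and [x ∧ y ∧ x = y ∧ x] follows by commutativity and associativity. *)
From Stdlib Require Import Setoid.

Section MeetComplAlgebra.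

Context {B : Type} {meet : B -> B -> B} {compl : B -> B}.

Hypothesis meetC : forall x y : B, meet x y = meet y x.
Hypothesis meetA : forall x y z : B, meet x (meet y z) = meet (meet x y) z.
Hypothesis complK : forall x : B, compl (compl x) = x.
Hypothesis compl_split : forall x y : B,
  compl x = meet (compl (meet x y)) (compl (meet x (compl y))).

Lemma meetCA (x y z : B) : meet x (meet y z) = meet y (meet x z).
Proof. rewrite meetA, (meetC x y), <- meetA; reflexivity. Qed.

Lemma meetACA (a b c d : B) :
  meet (meet a b) (meet c d) = meet (meet c a) (meet d b).
Proof.
  rewrite <- (meetA a b), (meetCA b c d), (meetCA a c), (meetC b d), <- meetA.
  reflexivity.
Qed.

(* Expand [x = x''] and [x'] by the axiom along [y]; regrouping the four
   factors gives [y'] and [y'' = y]. *)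
Lemma meet_compl_invariant (x y : B) :
  meet x (compl x) = meet y (compl y).
Proof.
  transitivity
    (meet (meet (compl (meet (compl x) y)) (compl (meet (compl x) (compl y))))
          (meet (compl (meet x y)) (compl (meet x (compl y))))).
  { rewrite <- (compl_split (compl x) y), <- (compl_split x y), complK.
    reflexivity. }
  rewrite meetACA.
  rewrite (meetC x y), (meetC (compl x) y), (meetC x (compl y)),
    (meetC (compl x) (compl y)).
  rewrite <- (compl_split y x), <- (compl_split (compl y) x), complK.
  apply meetC.
Qed.

Lemma meet_bot_r (x y : B) : meet x (meet y (compl y)) = meet y (compl y).
Proof.
  rewrite <- (meet_compl_invariant x y).
  transitivity
    (meet (meet x x) (meet (compl (meet x x)) (compl (meet x (compl x))))).
  { rewrite <- compl_split, meetA; reflexivity. }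
  rewrite meetA, (meet_compl_invariant (meet x x) x).
  apply meet_compl_invariant.
Qed.

Lemma compl_eq_meet_top (y z : B) :
  compl z = meet (compl (meet y (compl y)))
                 (compl (meet z (compl (meet y (compl y))))).
Proof. rewrite (compl_split z (meet y (compl y))), meet_bot_r; reflexivity. Qed.

Lemma meet_top_r (x y : B) : meet x (compl (meet y (compl y))) = x.
Proof.
  set (top := compl (meet y (compl y))).
  assert (top_idem : meet top top = top).
  { unfold top at 3.
    rewrite (compl_eq_meet_top y (meet y (compl y))),
      (meet_compl_invariant (meet y (compl y)) y).
    reflexivity. }
  assert (x_top : x = meet top (compl (meet (compl x) top))).
  { rewrite <- (complK x) at 1; apply compl_eq_meet_top. }
  rewrite x_top at 1.
  rewrite meetC, meetA, top_idem.
  symmetry; exact x_top.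
Qed.

Lemma meetxx (x : B) : meet x x = x.
Proof.
  assert (compl_meetxx : compl x = compl (meet x x)).
  { rewrite (compl_split x x) at 1; apply meet_top_r. }
  rewrite <- (complK (meet x x)), <- compl_meetxx; apply complK.
Qed.

End MeetComplAlgebra.

Theorem lemma2p9 (B : Type) (meet : B -> B -> B) (compl : B -> B)
  (Hcomm : forall x y : B, meet x y = meet y x)
  (Hassoc : forall x y z : B, meet x (meet y z) = meet (meet x y) z)
  (Hinv : forall x : B, compl (compl x) = x)
  (Hax : forall x y : B,
     compl x = meet (compl (meet x y)) (compl (meet x (compl y)))) :
  forall x y : B, compl (meet (meet x y) x) = compl (meet y x).
Proof.
  intros x y. f_equal.
  rewrite (Hcomm (meet x y) x), Hassoc, (meetxx Hcomm Hassoc Hinv Hax).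
  apply Hcomm.
Qed.
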